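(* Let $f_1,f_2,\dots$ be frog model statistics with values in $[0,\infty]$ and let $f=\sum_{i=1}^\infty f_i$. If all $f_i$ are icv statistics, then $f$ is an icv statistic; if all $f_i$ are pgf statistics, then $f$ is a pgf statistic.
   Context: Frog model: $G$ countable with root $\emptyset$; $(\eta,S)$ consists of counts $\eta(v)\in\{0,1,\dots\}$ for $v\ne\emptyset$ and paths $S_\cdot(v,i)$ with $S_0(v,i)=v$; one active frog starts at $\emptyset$; sleeping frogs activate when an active frog visits their vertex, then follow their paths. $\sigma_{P_\cdot}(\eta,S)$: add an extra frog with path $P_\cdot$ at $P_0$ (nonroot). $\Delta_{P_\cdot}f(\eta,S)=f(\sigma_{P_\cdot}(\eta,S))-f(\eta,S)$. $f$ is an icv statistic if for all $(\eta,S)$ and paths $P^1_\cdot,\dots,P^m_\cdot$ with a common start: (i) for $m=1,2$, $(-1)^m\Delta_{P^1_\cdot}\cdots\Delta_{P^m_\cdot}f(\eta,S)\le0$ whenever all values $f(\sigma_{P^{u_1}_\cdot}\cdots\sigma_{P^{u_j}_\cdot}(\eta,S))$, $\{u_1,\dots,u_j\}\subseteq\{1,\dots,m\}$, are finite; (ii) $f(\eta,S)=\infty\Rightarrow f(\sigma_{P^1_\cdot}(\eta,S))=\infty$; (iii) $f(\sigma_{P^1_\cdot}\sigma_{P^2_\cdot}(\eta,S))=\infty\Rightarrow f(\sigma_{P^i_\cdot}(\eta,S))=\infty$ for $i=1$ or $2$. $f$ is a pgf statistic if (ii),(iii) hold and (i) holds for all $m\ge1$. *)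

From HB Require Import structures.
From mathcomp Require Import all_boot all_order all_algebra.
From mathcomp Require Import all_classical all_reals all_analysis.
Set Implicit Arguments. Unset Strict Implicit. Unset Printing Implicit Defensive.
Import Order.TTheory GRing.Theory Num.Theory.

(* A frog model configuration (eta, S) on a countable vertex set V.
   eta v = number of sleeping frogs at v; paths v i = path S_.(v,i) of the
   i-th frog at v (frogs at v are indexed 0, ..., eta v - 1). *)
Record config (V : Type) := Config {
  eta : V -> nat;
  paths : V -> nat -> (nat -> V) }.

(* Well-formed configuration: no sleeping frogs at the root (the root carries
   the single initially active frog), and S_0(v,i) = v. *)
Definition valid_config (V : eqType) (root : V) (x : config V) : Prop :=
  eta x root = 0%N /\ forall v i, paths x v i 0%N = v.

(* sigma_P : add one extra sleeping frog with path P at vertex P 0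
   (it receives the next free index eta (P 0)). *)
Definition sigma (V : eqType) (P : nat -> V) (x : config V) : config V :=
  Config (fun v => if v == P 0%N then (eta x v).+1 else eta x v)
         (fun v i => if (v == P 0%N) && (i == eta x v) then P else paths x v i).

(* Iterated difference operator:
   iterD [:: P1; ...; Pm] f x = Delta_{P1} ... Delta_{Pm} f (x),
   computed with real values (only used when all terms are finite). *)
Fixpoint iterD (R : realType) (V : eqType) (Ps : seq (nat -> V))
    (f : config V -> \bar R) (x : config V) : R :=
  match Ps with
  | [::] => fine (f x)
  | P :: Ps' => (iterD Ps' f (sigma P x) - iterD Ps' f x)%R
  end.

Fixpoint all_finite (R : realType) (V : eqType) (Ps : seq (nat -> V))
    (f : config V -> \bar R) (x : config V) : Prop :=
  match Ps with
  | [::] => f x \is a fin_num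
  | P :: Ps' => all_finite Ps' f (sigma P x) /\ all_finite Ps' f x
  end.

Definition cond_i (R : realType) (V : eqType) (root : V)
    (f : config V -> \bar R) (m : nat) : Prop :=
  forall (x : config V) (v : V) (Ps : seq (nat -> V)),
    valid_config root x -> v != root -> size Ps = m ->
    (forall P, P \in Ps -> P 0%N = v) ->
    all_finite Ps f x ->
    ((-1) ^+ m * iterD Ps f x <= 0)%R.

Definition cond_ii (R : realType) (V : eqType) (root : V)
    (f : config V -> \bar R) : Prop :=
  forall (x : config V) (P : nat -> V),
    valid_config root x -> P 0%N != root ->
    f x = +oo%E -> f (sigma P x) = +oo%E.

Definition cond_iii (R : realType) (V : eqType) (root : V)
    (f : config V -> \bar R) : Prop :=
  forall (x : config V) (P1 P2 : nat -> V),
    valid_config root x -> P1 0%N != root -> P1 0%N = P2 0%N ->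
    f (sigma P1 (sigma P2 x)) = +oo%E ->
    f (sigma P1 x) = +oo%E \/ f (sigma P2 x) = +oo%E.

Definition icv (R : realType) (V : eqType) (root : V)
    (f : config V -> \bar R) : Prop :=
  cond_i root f 1 /\ cond_i root f 2 /\ cond_ii root f /\ cond_iii root f.

Definition pgf (R : realType) (V : eqType) (root : V)
    (f : config V -> \bar R) : Prop :=
  (forall m, (1 <= m)%N -> cond_i root f m) /\ cond_ii root f /\ cond_iii root f.

From Pilot Require Import Defs.
From mathcomp Require Import all_boot all_order all_algebra.
From mathcomp Require Import all_classical all_reals all_analysis.
From mathcomp Require Import lra.
Set Implicit Arguments.
Unset Strict Implicit.
Unset Printing Implicit Defensive.

Import Order.TTheory GRing.Theory Num.Theory.
Import numFieldNormedType.Exports.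
Local Open Scope classical_set_scope.
Local Open Scope ring_scope.
Local Open Scope ereal_scope.

(* Condition (i) is linear in f, so it holds for every partial sum of the
   series, and it is a closed condition on finitely many real values, so it
   passes to the limit; since the f_i are nonnegative, finiteness of the sum at
   a configuration forces finiteness of every term there.  Condition (i) with
   m = 1 makes each f_i nondecreasing under sigma, which gives (ii) for the sum.
   Condition (i) with m = 2, together with f_i >= 0, gives
   f_i(sigma_1 sigma_2 x) <= f_i(sigma_1 x) + f_i(sigma_2 x); summing over i
   bounds the sum at sigma_1 sigma_2 x by a sum of two finite values, which
   gives (iii). *)

Section NonnegativeSeries.
Variables (R : realType) (u : (\bar R)^nat).
Hypothesis u_ge0 : forall i, 0 <= u i.

Lemma nneseries_ge_term i : u i <= \sum_(j <oo) u j.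
Proof.
apply: le_trans (nneseries_lim_ge i.+1 (fun n _ _ => u_ge0 n)).
by rewrite big_nat_recr //= leeDr // sume_ge0.
Qed.

Lemma fin_num_nneseries_term i :
  \sum_(j <oo) u j \is a fin_num -> u i \is a fin_num.
Proof.
rewrite !ge0_fin_numE ?nneseries_ge0 //; apply: le_lt_trans.
exact: nneseries_ge_term.
Qed.

Lemma fine_partial_sum n : \sum_(j <oo) u j \is a fin_num ->
  fine (\sum_(0 <= j < n) u j) = (\sum_(0 <= j < n) fine (u j))%R.
Proof.
move=> sum_fin; elim: n => [|n IHn]; first by rewrite !big_geq.
rewrite !big_nat_recr //= fineD ?IHn ?fin_num_nneseries_term //.
rewrite sum_fin_num; apply/allP => _ /mapP[j _ ->].
exact: fin_num_nneseries_term.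
Qed.

Lemma cvg_fine_partial_sums : \sum_(j <oo) u j \is a fin_num ->
  (fun n => fine (\sum_(0 <= j < n) u j)) @ \oo --> fine (\sum_(j <oo) u j).
Proof.
move=> sum_fin; apply: fine_cvg; rewrite fineK //.
exact: is_cvg_nneseries.
Qed.

End NonnegativeSeries.

Section IcvStatistic.
Variables (R : realType) (V : eqType) (root : V) (f : config V -> \bar R).
Hypotheses (f_ge0 : forall x, 0 <= f x).
Hypotheses (f_i1 : cond_i root f 1) (f_i2 : cond_i root f 2).
Hypotheses (f_ii : cond_ii root f) (f_iii : cond_iii root f).

Lemma fin_num_statistic x : (f x \is a fin_num) = (f x != +oo).
Proof. by rewrite ge0_fin_numE // ltey. Qed.

Lemma le_statistic_sigma x P :
  valid_config root x -> P 0%N != root -> f x <= f (sigma P x).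
Proof.
move=> x_ok P_root.
have [fx_oo|fx_fin] := eqVneq (f x) +oo.
  by rewrite (f_ii x_ok P_root fx_oo) leey.
have [fPx_oo|fPx_fin] := eqVneq (f (sigma P x)) +oo; first by rewrite fPx_oo leey.
move: fx_fin fPx_fin; rewrite -!fin_num_statistic => fx_fin fPx_fin.
have first_difference : ((-1) ^+ 1 * Defs.iterD [:: P] f x <= 0)%R.
  apply: (f_i1 x_ok P_root (erefl : size [:: P] = 1%N)) => //.
  by move=> Q; rewrite inE => /eqP ->.
rewrite /= expr1 mulN1r oppr_le0 subr_ge0 in first_difference.
by rewrite -(fineK fx_fin) -(fineK fPx_fin) lee_fin.
Qed.

Lemma statistic_sigma_subadditive x P1 P2 :
  valid_config root x -> P1 0%N != root -> P1 0%N = P2 0%N ->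
  f (sigma P1 (sigma P2 x)) <= f (sigma P1 x) + f (sigma P2 x).
Proof.
move=> x_ok P1_root P12.
have [f1_oo|f1_fin] := eqVneq (f (sigma P1 x)) +oo.
  by rewrite f1_oo addye ?leey // gt_eqF // (lt_le_trans _ (f_ge0 _)) ?ltNy0.
have [f2_oo|f2_fin] := eqVneq (f (sigma P2 x)) +oo.
  by rewrite f2_oo addey ?leey // gt_eqF // (lt_le_trans _ (f_ge0 _)) ?ltNy0.
have f12_fin : f (sigma P1 (sigma P2 x)) != +oo.
  by apply/eqP => /(f_iii x_ok P1_root P12) [] /eqP; apply/negP.
have fx_fin : f x != +oo.
  apply: contra_neq f1_fin => fx_oo; apply/eqP; rewrite -leye_eq -fx_oo.
  exact: le_statistic_sigma.
move: f1_fin f2_fin f12_fin fx_fin; rewrite -!fin_num_statistic.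
move=> f1_fin f2_fin f12_fin fx_fin.
have second_difference : ((-1) ^+ 2 * Defs.iterD [:: P2; P1] f x <= 0)%R.
  apply: (f_i2 x_ok P1_root (erefl : size [:: P2; P1] = 2%N)); last by [].
  by move=> Q; rewrite !inE => /orP[] /eqP ->.
rewrite /= expr2 mulrNN mul1r in second_difference.
rewrite -(fineK f1_fin) -(fineK f2_fin) -(fineK f12_fin) -EFinD lee_fin.
have := fine_ge0 (f_ge0 x); move: second_difference; lra.
Qed.

End IcvStatistic.

Section SeriesOfStatistics.
Variables (R : realType) (V : countType) (root : V).
Variable F : nat -> config V -> \bar R.
Hypothesis F_ge0 : forall i x, 0 <= F i x.

Let Fsum x := \sum_(i <oo) F i x.

Lemma all_finite_Fsum_term Ps x i :
  all_finite Ps Fsum x -> all_finite Ps (F i) x.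
Proof.
elim: Ps x => [|P Ps IHPs] x /=; first exact: fin_num_nneseries_term.
by case=> ? ?; split; apply: IHPs.
Qed.

Lemma iterD_partial_sum Ps x n : all_finite Ps Fsum x ->
  Defs.iterD Ps (fun y => \sum_(0 <= i < n) F i y) x =
  (\sum_(0 <= i < n) Defs.iterD Ps (F i) x)%R.
Proof.
elim: Ps x => [|P Ps IHPs] x /=; first exact: fine_partial_sum.
by case=> ? ?; rewrite !IHPs // -sumrB.
Qed.

Lemma cvg_iterD_partial_sums Ps x : all_finite Ps Fsum x ->
  (fun n => Defs.iterD Ps (fun y => \sum_(0 <= i < n) F i y) x) @ \oo -->
  Defs.iterD Ps Fsum x.
Proof.
elim: Ps x => [|P Ps IHPs] x /=; first exact: cvg_fine_partial_sums.
by case=> ? ?; apply: cvgB; apply: IHPs.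
Qed.

Lemma cond_i_Fsum m : (forall i, cond_i root (F i) m) -> cond_i root Fsum m.
Proof.
move=> F_i x v Ps x_ok v_root size_Ps Ps_v Ps_fin.
apply: (cvgr_to_le (cvgM (cvg_cst _) (cvg_iterD_partial_sums Ps_fin))).
apply: nearW => n /=.
rewrite iterD_partial_sum // mulr_sumr; apply: sumr_le0 => i _.
exact: F_i x_ok v_root size_Ps Ps_v (all_finite_Fsum_term i Ps_fin).
Qed.

Lemma cond_ii_Fsum : (forall i, cond_i root (F i) 1) ->
  (forall i, cond_ii root (F i)) -> cond_ii root Fsum.
Proof.
move=> F_i1 F_ii x P x_ok P_root Fx_oo; apply/eqP; rewrite -leye_eq -Fx_oo.
apply: lee_nneseries => [i _ _|i _]; first exact: F_ge0.
exact: le_statistic_sigma.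
Qed.

Lemma cond_iii_Fsum : (forall i, cond_i root (F i) 1) ->
  (forall i, cond_i root (F i) 2) -> (forall i, cond_ii root (F i)) ->
  (forall i, cond_iii root (F i)) -> cond_iii root Fsum.
Proof.
move=> F_i1 F_i2 F_ii F_iii x P1 P2 x_ok P1_root P12 F12_oo.
have subadditive :
    Fsum (sigma P1 (sigma P2 x)) <= Fsum (sigma P1 x) + Fsum (sigma P2 x).
  rewrite -nneseriesD //.
  apply: lee_nneseries => [i _ _|i _]; first exact: F_ge0.
  exact: statistic_sigma_subadditive.
have [F1_oo|F1_fin] := eqVneq (Fsum (sigma P1 x)) +oo; first by left.
have [F2_oo|F2_fin] := eqVneq (Fsum (sigma P2 x)) +oo; first by right.
have : Fsum (sigma P1 x) + Fsum (sigma P2 x) < +oo.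
  by rewrite lte_add_pinfty ?ltey.
by move: subadditive; rewrite F12_oo leye_eq => /eqP <-; rewrite ltxx.
Qed.

End SeriesOfStatistics.

Theorem lemma20 (R : realType) (V : countType) (root : V)
    (F : nat -> config V -> \bar R)
    (F_ge0 : forall (i : nat) (x : config V), 0 <= F i x) :
  ((forall i : nat, icv root (F i)) ->
     icv root (fun x : config V => \sum_(i <oo) F i x)) /\
  ((forall i : nat, pgf root (F i)) ->
     pgf root (fun x : config V => \sum_(i <oo) F i x)).
Proof.
split=> [F_icv | F_pgf].
- have F_i1 i := (F_icv i).1; have F_i2 i := (F_icv i).2.1.
  have F_ii i := (F_icv i).2.2.1; have F_iii i := (F_icv i).2.2.2.
  split; first exact: cond_i_Fsum.
  split; first exact: cond_i_Fsum.
  by split; [exact: cond_ii_Fsum | exact: cond_iii_Fsum].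
- have F_i i m : (1 <= m)%N -> cond_i root (F i) m by exact: (F_pgf i).1.
  have F_i1 i := F_i i 1%N isT; have F_i2 i := F_i i 2%N isT.
  have F_ii i := (F_pgf i).2.1; have F_iii i := (F_pgf i).2.2.
  split=> [m m_ge1|].
    by have F_im i := F_i i m m_ge1; exact: cond_i_Fsum.
  by split; [exact: cond_ii_Fsum | exact: cond_iii_Fsum].
Qed.
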